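(* For every set $X$, the function $\theta_X\colon\mathrm L^+(\mathrm L^+(X))\to\mathrm L^+(\mathrm L^+(X))$ is injective. If $X$ is non-empty, then $\theta_X$ is not surjective.
   Context: For a set $X$, $\mathrm L^+(X)=\coprod_{n>0}X^n$ is the set of non-empty finite lists $[x_1,\dots,x_n]$ of elements of $X$. The map $\theta_X$ sends a list of lists $[[x_{1,1},\dots,x_{1,n_1}],\dots,[x_{m,1},\dots,x_{m,n_m}]]$ (with $m,n_i\ge1$) to the list consisting, in order, for $i=1,\dots,m$ and then $j=1,\dots,n_i$, of the lists $[x_{i,j},x_{i+1,1},x_{i+2,1},\dots,x_{m,1}]$; i.e. $[[x_{1,1},x_{2,1},\dots,x_{m,1}],\dots,[x_{1,n_1},x_{2,1},\dots,x_{m,1}],[x_{2,1},x_{3,1},\dots,x_{m,1}],\dots,[x_{2,n_2},x_{3,1},\dots,x_{m,1}],\dots,[x_{m,1}],\dots,[x_{m,n_m}]]$. *)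

From Stdlib Require Import List.
Import ListNotations.

(* L^+(X): non-empty finite lists, represented as (first element, rest). *)
Definition Lp (X : Type) : Type := (X * list X)%type.

Definition to_list {X : Type} (l : Lp X) : list X := fst l :: snd l.

(* For lists of non-empty lists L_1, ..., L_m (given as a list),
   theta_aux produces, in order, for each i and each x in L_i, the list
   [x, head L_{i+1}, ..., head L_m]. *)
Fixpoint theta_aux {X : Type} (ls : list (Lp X)) : list (Lp X) :=
  match ls with
  | nil => nil
  | l :: rest =>
      map (fun x => (x, map fst rest)) (to_list l) ++ theta_aux rest
  end.

Definition theta {X : Type} (L : Lp (Lp X)) : Lp (Lp X) :=
  let (l1, rest) := L in
  let (x11, xs1) := l1 in
  ((x11, map fst rest),
   map (fun x => (x, map fst rest)) xs1 ++ theta_aux rest).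

Lemma theta_to_list {X : Type} (L : Lp (Lp X)) :
  to_list (theta L) = theta_aux (to_list L).
Proof. destruct L as [[x xs] rest]; reflexivity. Qed.

From Stdlib Require Import List PeanoNat Lia.
Import ListNotations.

(* All entries of [theta L] produced by the i-th list of L have the same
   length m - i + 1, and these lengths strictly decrease with i.  Hence
   [theta L] splits uniquely into its blocks, the first components of the
   i-th block give back the i-th list, and L is recovered by induction.
   For non-surjectivity: the first entry of [theta L] has length m, while
   [theta L] has at least m entries, so [[x; x]] is not a value of theta. *)

Lemma to_list_inj {X : Type} (a b : Lp X) : to_list a = to_list b -> a = b.
Proof. destruct a, b; cbn; intros [= -> ->]; reflexivity. Qed.

Lemma map_pair_r_inj {A B : Type} (b1 b2 : B) (l1 l2 : list A) :
  map (fun a => (a, b1)) l1 = map (fun a => (a, b2)) l2 -> l1 = l2.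
Proof.
  intro E; apply (f_equal (map fst)) in E.
  rewrite !map_map in E; cbn in E; rewrite !map_id in E; exact E.
Qed.

Lemma app_inj_sep {A : Type} (P : A -> Prop) (a b a' b' : list A) :
  (forall x, In x a -> P x) -> (forall x, In x a' -> P x) ->
  (forall x, In x b -> ~ P x) -> (forall x, In x b' -> ~ P x) ->
  a ++ b = a' ++ b' -> a = a' /\ b = b'.
Proof.
  revert a'; induction a as [|h t IH]; intros [|h' t'] Ha Ha' Hb Hb' E; cbn in *.
  - split; [reflexivity | exact E].
  - exfalso; apply (Hb h'); [rewrite E; left; reflexivity | apply Ha'; left; reflexivity].
  - exfalso; apply (Hb' h); [rewrite <- E; left; reflexivity | apply Ha; left; reflexivity].
  - injection E as -> E.
    destruct (IH t') as [-> ->]; auto.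
Qed.

Lemma theta_aux_tail_length_lt {X : Type} (ls : list (Lp X)) (y : Lp X) :
  In y (theta_aux ls) -> length (snd y) < length ls.
Proof.
  induction ls as [|l rest IH]; cbn [theta_aux length]; [contradiction|].
  intro Hy; apply in_app_or in Hy as [Hy|Hy].
  - apply in_map_iff in Hy as [x [<- _]]; cbn.
    rewrite length_map; apply Nat.lt_succ_diag_r.
  - specialize (IH Hy); lia.
Qed.

Lemma theta_aux_length_ge {X : Type} (ls : list (Lp X)) :
  length ls <= length (theta_aux ls).
Proof.
  induction ls as [|[x xs] rest IH]; cbn [theta_aux length]; [lia|].
  rewrite length_app; cbn; unfold Lp in *; lia.
Qed.

Lemma theta_aux_inj {X : Type} (ls1 ls2 : list (Lp X)) :
  theta_aux ls1 = theta_aux ls2 -> ls1 = ls2.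
Proof.
  revert ls2; induction ls1 as [|l1 rest1 IH]; intros [|l2 rest2] E;
    cbn [theta_aux] in E; try reflexivity.
  - destruct l2; discriminate.
  - destruct l1; discriminate.
  - assert (Hlen : length rest1 = length rest2).
    { destruct l1, l2; cbn in E; injection E as _ E _.
      apply (f_equal (@length X)) in E; rewrite !length_map in E; exact E. }
    apply (app_inj_sep (fun y => length (snd y) = length rest1)) in E
      as [Hblock Hrest].
    + apply map_pair_r_inj, to_list_inj in Hblock as ->.
      f_equal; apply IH, Hrest.
    + intros y Hy; apply in_map_iff in Hy as [x [<- _]]; apply length_map.
    + intros y Hy; apply in_map_iff in Hy as [x [<- _]].
      cbn; rewrite Hlen; apply length_map.
    + intros y Hy; apply theta_aux_tail_length_lt in Hy; lia.
    + intros y Hy; apply theta_aux_tail_length_lt in Hy; lia.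
Qed.

Lemma theta_inj {X : Type} (L1 L2 : Lp (Lp X)) : theta L1 = theta L2 -> L1 = L2.
Proof.
  intro E; apply (f_equal to_list) in E; rewrite !theta_to_list in E.
  apply to_list_inj, theta_aux_inj, E.
Qed.

Lemma theta_head_length {X : Type} (L : Lp (Lp X)) :
  length (to_list (fst (theta L))) = length (to_list L).
Proof. destruct L as [[x xs] rest]; cbn; rewrite length_map; reflexivity. Qed.

Lemma theta_length_ge {X : Type} (L : Lp (Lp X)) :
  length (to_list L) <= length (to_list (theta L)).
Proof. rewrite theta_to_list; apply theta_aux_length_ge. Qed.

Lemma theta_neq_singleton_pair {X : Type} (x : X) (L : Lp (Lp X)) :
  theta L <> ((x, [x]), []).
Proof.
  intro E.
  pose proof (theta_head_length L) as Hhead; pose proof (theta_length_ge L) as Hlen.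
  rewrite E in Hhead, Hlen; cbn in Hhead, Hlen; lia.
Qed.

Theorem proposition5p2 :
  forall X : Type,
    (forall L1 L2 : Lp (Lp X), theta L1 = theta L2 -> L1 = L2) /\
    (inhabited X -> ~ (forall M : Lp (Lp X), exists L : Lp (Lp X), theta L = M)).
Proof.
  intro X; split.
  - exact theta_inj.
  - intros [x] Hsurj.
    destruct (Hsurj ((x, [x]), [])) as [L E].
    exact (theta_neq_singleton_pair x L E).
Qed.
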